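(* Let $x\in\mathbb{R}^p$ have $\mathbb{E}[x]=0$, covariance $\Sigma$ and bounded fourth moments with constant $C_4$. Let $\Phi:\mathbb{R}\to\mathbb{R}$ be four times differentiable and $c(\sigma)>0$, and let $y$ be real-valued with, conditionally on $x$ and writing $\eta^*=\langle x,\theta^*\rangle$, $\mathbb{E}[y\mid x]=\Phi'(\eta^* )$ and $\mathbb{E}[(y-\Phi'(\eta^* ))^4\mid x]=c(\sigma)^3\Phi^{(4)}(\eta^* )+3c(\sigma)^2(\Phi''(\eta^* ))^2$ (as holds when $y\mid x$ has density proportional to $\exp((y\eta^*-\Phi(\eta^* ))/c(\sigma))$ with respect to a base measure). Assume there are constants $L_{\Phi,2k},B_{\Phi,2k}\ge0$ ($k=1,2$) with $\mathbb{E}_x|\Phi'(\langle x,\theta\rangle)-\Phi'(\langle x,\theta^*\rangle)|^{2k}\le L_{\Phi,2k}\|\theta-\theta^*\|_2^{2k}+B_{\Phi,2k}$ for all $\theta$, and constants $M_{\Phi,2,2},M_{\Phi,4,1}$ with $\mathbb{E}_x[|\Phi''(\eta^* )|^2]\le M_{\Phi,2,2}$, $\mathbb{E}_x[|\Phi^{(4)}(\eta^* )|]\le M_{\Phi,4,1}$. Let $\overline{\mathcal{L}}(\theta;(x,y))=-y\langle x,\theta\rangle+\Phi(\langle x,\theta\rangle)$ and $\Delta=\theta-\theta^*$. Then there are constants $C_1,C_2>0$ depending only on $C_4$ such that for all $\theta\in\mathbb{R}^p$, $$\|\operatorname{Cov}(\nabla_\theta\overline{\mathcal{L}}(\theta;(x,y)))\|_2\le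 C_1\|\Delta\|_2^2\|\Sigma\|_2\big(\sqrt{L_{\Phi,4}}+L_{\Phi,2}\big)+C_2\|\Sigma\|_2\Big(B_{\Phi,2}+\sqrt{B_{\Phi,4}}+c(\sigma)\sqrt{3M_{\Phi,2,2}}+\sqrt{c(\sigma)^3M_{\Phi,4,1}}\Big).$$
   Context: A random vector $x$ with mean $\mu$ has bounded $2k$-th moments with constant $C_{2k}$ if for every unit vector $v$, $\mathbb{E}[\langle x-\mu,v\rangle^{2k}]\le C_{2k}(\mathbb{E}[\langle x-\mu,v\rangle^2])^k$. Matrix norm $\|\cdot\|_2$ is the operator norm. *)

From HB Require Import structures.
From mathcomp Require Import all_boot all_order all_algebra.
From mathcomp Require Import all_classical all_reals all_analysis.
Set Implicit Arguments. Unset Strict Implicit. Unset Printing Implicit Defensive.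
Import Order.TTheory GRing.Theory Num.Theory.
Local Open Scope classical_set_scope.
Local Open Scope ring_scope.

Section Defs.
Context {R : realType}.

Definition dotv {p : nat} (u v : 'cV[R]_p) : R := \sum_(i < p) u i 0 * v i 0.
Definition l2norm {p : nat} (v : 'cV[R]_p) : R := Num.sqrt (dotv v v).

Definition opnorm {p : nat} (A : 'M[R]_p) : R :=
  sup [set l2norm (A *m v) | v in [set v : 'cV[R]_p | l2norm v = 1]].

Context {d : measure_display} {T : measurableType d} (P : probability T R).

Definition xvec {p : nat} (xs : 'I_p -> T -> R) (w : T) : 'cV[R]_p :=
  \col_i xs i w.

Definition meanvec {p : nat} (xs : 'I_p -> T -> R) : 'cV[R]_p :=
  \col_i fine ('E_P[xs i])%E.
Definition covmx {p : nat} (xs : 'I_p -> T -> R) : 'M[R]_p :=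
  \matrix_(i, j) fine (covariance P (xs i) (xs j)).

Definition bounded_moments {p : nat} (k : nat) (C : R) (xs : 'I_p -> T -> R) :=
  forall v : 'cV[R]_p, l2norm v = 1 ->
    ('E_P[(fun w => dotv (xvec xs w - meanvec xs) v ^+ (2 * k))%R]
      <= (C * (fine 'E_P[(fun w => dotv (xvec xs w - meanvec xs) v ^+ 2)%R]) ^+ k)%:E)%E.

Definition sigma_of {p : nat} (xs : 'I_p -> T -> R) : set (set T) :=
  <<s [set A | exists i (B : set R), measurable B /\ A = xs i @^-1` B] >>.

(* W is (a version of) the conditional expectation E[Z | x]:
   Z integrable and the integrals of Z and W agree on every sigma(x)-set *)
Definition cond_exp_is {p : nat} (xs : 'I_p -> T -> R) (Z W : T -> R) :=
  P.-integrable setT (EFin \o Z) /\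
  forall A, sigma_of xs A ->
    (\int[P]_(w in A) (Z w)%:E = \int[P]_(w in A) (W w)%:E)%E.

End Defs.

From HB Require Import structures.
From mathcomp Require Import all_boot all_order all_algebra.
From mathcomp Require Import all_classical all_reals all_analysis.
From mathcomp Require Import measurable_realfun.
From mathcomp Require Import ring lra.
Import Order.TTheory GRing.Theory Num.Theory.
Import numFieldNormedType.Exports.
Local Open Scope classical_set_scope.
Local Open Scope ring_scope.

(* For a unit vector v, v^T Cov(grad) v is the variance of Z <x, v>, where
   Z = Phi'(<x, theta>) - y; it is thus at most E[Z^2 <x, v>^2], which by
   Cauchy-Schwarz and the bounded fourth moments of x (x being centred) is at
   most sqrt (E Z^4) * sqrt C4 * v^T Sigma v.  Writing
   Z = (Phi'(<x, theta>) - Phi'(eta_star)) - (y - Phi'(eta_star)) and using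
   (a - b)^4 <= 8 a^4 + 8 b^4 gives
   E Z^4 <= 8 (L4 |Delta|^4 + B4) + 8 (c^3 M41 + 3 c^2 M22), the second term
   being the conditional fourth moment of the noise integrated over the whole
   space; its square root is at most sqrt 8 times the sum of the square roots.
   As Cov(grad) is symmetric positive semidefinite, its operator norm is the
   supremum of its quadratic form on the unit sphere. *)

Section Discriminant.
Set Implicit Arguments. Unset Strict Implicit.
Variable R : rcfType.

Lemma discriminant_le (a b c : R) :
  (forall t, 0 <= a * t ^+ 2 + 2 * b * t + c) -> b ^+ 2 <= a * c.
Proof.
move=> ge0; pose q := Poly [:: c; 2 * b; a].
have q_ge0 t : 0 <= q.[t].
  by rewrite horner_Poly /= mul0r add0r; have := ge0 t; lra.
by have := deg_le2_poly_ge0 (size_Poly [:: c; 2 * b; a]) q_ge0; rewrite !coefE /=; lra.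
Qed.

End Discriminant.

Section Inequalities.
Set Implicit Arguments. Unset Strict Implicit.
Variable R : realFieldType.

Lemma pow4_sub_le (a b : R) : (a - b) ^+ 4 <= 8 * a ^+ 4 + 8 * b ^+ 4.
Proof.
rewrite -[4%N]/(2 * 2)%N !exprM.
have h1 : (a - b) ^+ 2 <= 2 * (a ^+ 2 + b ^+ 2) by have := sqr_ge0 (a + b); nra.
have h2 := sqr_ge0 (a ^+ 2 - b ^+ 2).
have : ((a - b) ^+ 2) ^+ 2 <= (2 * (a ^+ 2 + b ^+ 2)) ^+ 2.
  by rewrite ler_pXn2r ?nnegrE ?sqr_ge0 // (le_trans (sqr_ge0 _) h1).
nra.
Qed.

Lemma pow4_ge0 (a : R) : 0 <= a ^+ 4.
Proof. exact: exprn_even_ge0. Qed.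

Lemma sqr_add4_le (a b c e : R) : 0 <= a -> 0 <= b -> 0 <= c -> 0 <= e ->
  a ^+ 2 + b ^+ 2 + c ^+ 2 + e ^+ 2 <= (a + b + c + e) ^+ 2.
Proof. by move=> *; nra. Qed.

End Inequalities.

Section EuclideanSpace.
Set Implicit Arguments. Unset Strict Implicit.
Variables (R : realType) (p : nat).
Implicit Types (u v z : 'cV[R]_p) (A : 'M[R]_p).

Lemma dotv_ge0 v : 0 <= dotv v v.
Proof. by apply: sumr_ge0 => i _; rewrite -expr2 sqr_ge0. Qed.

Lemma dotv_eq0 v : dotv v v = 0 -> v = 0.
Proof.
move=> /eqP; rewrite psumr_eq0 => [/allP v0|i _]; last by rewrite -expr2 sqr_ge0.
apply/matrixP => i j; rewrite ord1 mxE.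
by have /(_ (mem_index_enum i))/implyP/(_ isT) := v0 i; rewrite mulf_eq0 orbb => /eqP.
Qed.

Lemma dotv_expand u v t :
  dotv (t *: u + v) (t *: u + v) = dotv u u * t ^+ 2 + 2 * dotv u v * t + dotv v v.
Proof.
rewrite /dotv mulr_sumr !mulr_suml -!big_split /=; apply: eq_bigr => i _.
by rewrite !mxE; ring.
Qed.

Lemma dotv_cauchy_schwarz u v : dotv u v ^+ 2 <= dotv u u * dotv v v.
Proof.
by apply: discriminant_le => t; rewrite -dotv_expand dotv_ge0.
Qed.

Lemma sqr_l2norm v : l2norm v ^+ 2 = dotv v v.
Proof. exact: sqr_sqrtr (dotv_ge0 v). Qed.

Lemma l2norm_ge0 v : 0 <= l2norm v.
Proof. exact: sqrtr_ge0. Qed.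

Lemma l2normZ t v : l2norm (t *: v) = `|t| * l2norm v.
Proof.
rewrite /l2norm (_ : dotv _ _ = t ^+ 2 * dotv v v); last first.
  by rewrite /dotv mulr_sumr; apply: eq_bigr => i _; rewrite !mxE; ring.
by rewrite sqrtrM ?sqr_ge0 // sqrtr_sqr.
Qed.

Lemma dotv_delta u i : dotv u (delta_mx i 0) = u i 0.
Proof.
rewrite /dotv (bigD1 i) //= big1 => [|j ji]; rewrite mxE ?(negbTE ji) ?mulr0 //.
by rewrite !eqxx mulr1 addr0.
Qed.

Lemma l2norm_delta i : l2norm (delta_mx i 0 : 'cV[R]_p) = 1.
Proof. by rewrite /l2norm dotv_delta mxE !eqxx sqrtr1. Qed.

Lemma l2norm1_dotv v : l2norm v = 1 -> dotv v v = 1.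
Proof. by move=> v1; rewrite -sqr_l2norm v1 expr1n. Qed.

Lemma l2norm1_entry_le1 v j : l2norm v = 1 -> `|v j 0| <= 1.
Proof.
move=> /l2norm1_dotv v1.
have : v j 0 ^+ 2 <= 1.
  rewrite -v1 /dotv (bigD1 j) //= expr2 lerDl.
  by apply: sumr_ge0 => i _; rewrite -expr2 sqr_ge0.
by move=> h; rewrite -(@expr_le1 _ 2) // real_normK ?num_real.
Qed.

Definition mxform A u v : R := \sum_i \sum_j u i 0 * A i j * v j 0.

Lemma mxformE A u v : mxform A u v = dotv u (A *m v).
Proof.
apply: eq_bigr => i _; rewrite mxE mulr_sumr.
by apply: eq_bigr => j _; rewrite mulrA.
Qed.

Lemma mxformC A u v : A^T = A -> mxform A u v = mxform A v u.
Proof.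
move=> symA; rewrite /mxform exchange_big /=; apply: eq_bigr => i _.
by apply: eq_bigr => j _; rewrite -{1}symA mxE; ring.
Qed.

Lemma mxformZ A u t : mxform A (t *: u) (t *: u) = t ^+ 2 * mxform A u u.
Proof.
rewrite /mxform mulr_sumr; apply: eq_bigr => i _.
rewrite mulr_sumr; apply: eq_bigr => j _; rewrite !mxE; ring.
Qed.

Lemma mxform_expand A u v t :
  mxform A (t *: u + v) (t *: u + v) =
  t ^+ 2 * mxform A u u + t * (mxform A u v + mxform A v u) + mxform A v v.
Proof.
rewrite /mxform mulrDr !mulr_sumr -!big_split /=; apply: eq_bigr => i _.
rewrite !mulr_sumr -!big_split /=; apply: eq_bigr => j _.
by rewrite !mxE; ring.
Qed.

Lemma opnorm_ub A v : l2norm v = 1 -> l2norm (A *m v) <= opnorm A.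
Proof.
move=> v1; apply: ub_le_sup; last by exists v.
exists (Num.sqrt (\sum_i (\sum_j `|A i j|) ^+ 2)) => _ [u /= u1 <-].
rewrite ler_sqrt; last by apply: sumr_ge0 => i _; rewrite sqr_ge0.
apply: ler_sum => i _; rewrite -expr2 -real_normK ?num_real //.
rewrite ler_pXn2r ?nnegrE ?sumr_ge0 // mxE.
apply: le_trans (ler_norm_sum _ _ _) _; apply: ler_sum => j _; rewrite normrM.
by rewrite ler_piMr // l2norm1_entry_le1.
Qed.

(* This is the case p = 0, where [opnorm] is the supremum of the empty set. *)
Lemma opnorm_eq0_no_unit A : ~ (exists v, l2norm v = 1) -> opnorm A = 0.
Proof.
move=> no_unit; rewrite /opnorm (_ : [set _ | _ in _] = set0) ?sup0 //.
by apply/seteqP; split => // _ [v /= v1 _]; apply: no_unit; exists v.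
Qed.

Lemma opnorm_ge0 A : 0 <= opnorm A.
Proof.
have [[v v1]|no_unit] := pselect (exists v, l2norm v = 1).
  exact: le_trans (l2norm_ge0 _) (opnorm_ub A v1).
by rewrite opnorm_eq0_no_unit.
Qed.

Lemma opnorm_le A lam : 0 <= lam ->
  (forall v, l2norm v = 1 -> l2norm (A *m v) <= lam) -> opnorm A <= lam.
Proof.
move=> lam0 Alam; have [[v v1]|no_unit] := pselect (exists v, l2norm v = 1).
  apply: ge_sup; first by exists (l2norm (A *m v)), v.
  by move=> _ [u /= u1 <-]; exact: Alam.
by rewrite opnorm_eq0_no_unit.
Qed.

Lemma mxform_le_opnorm A v : l2norm v = 1 -> mxform A v v <= opnorm A.
Proof.
move=> v1; apply: le_trans (opnorm_ub A v1); rewrite mxformE.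
apply: le_trans (ler_norm _) _; rewrite -sqrtr_sqr ler_sqrt ?dotv_ge0 //.
by have := dotv_cauchy_schwarz v (A *m v); rewrite l2norm1_dotv // mul1r.
Qed.

Lemma mxform_le_dotv A lam :
  (forall v, l2norm v = 1 -> mxform A v v <= lam) ->
  forall z, mxform A z z <= lam * dotv z z.
Proof.
move=> Alam z; have [->|z_neq0] := eqVneq z 0.
  by rewrite mxformE mulmx0 /dotv big1 ?mulr0 // => i _; rewrite mxE mul0r.
have nz_gt0 : 0 < l2norm z.
  rewrite sqrtr_gt0 lt_neqAle dotv_ge0 andbT eq_sym.
  by apply: contra z_neq0 => /eqP/dotv_eq0 ->.
set n := l2norm z in nz_gt0 *.
have zE : z = n *: (n^-1 *: z) by rewrite scalerA mulfV ?gt_eqF // scale1r.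
have unit_z : l2norm (n^-1 *: z) = 1.
  by rewrite l2normZ ger0_norm ?invr_ge0 ?(ltW nz_gt0) // mulVf ?gt_eqF.
rewrite zE mxformZ -sqr_l2norm l2normZ (ger0_norm (ltW nz_gt0)) unit_z mulr1 mulrC.
by rewrite ler_wpM2r ?sqr_ge0 // Alam.
Qed.

Section PositiveSemidefinite.
Variable A : 'M[R]_p.
Hypotheses (symA : A^T = A) (psdA : forall z, 0 <= mxform A z z).

Lemma mxform_cauchy_schwarz u v : mxform A u v ^+ 2 <= mxform A u u * mxform A v v.
Proof.
apply: discriminant_le => t; have := psdA (t *: u + v).
by rewrite mxform_expand (mxformC v) //; lra.
Qed.

Lemma opnorm_psd_le lam : 0 <= lam ->
  (forall v, l2norm v = 1 -> mxform A v v <= lam) -> opnorm A <= lam.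
Proof.
move=> lam0 Alam; apply: opnorm_le => // v v1.
set w := A *m v.
have ww : dotv w w = mxform A w v by rewrite mxformE.
have ww_le : dotv w w ^+ 2 <= lam ^+ 2 * dotv w w.
  rewrite {1}ww; apply: le_trans (mxform_cauchy_schwarz w v) _.
  have := mxform_le_dotv Alam w; have := Alam v v1; have := psdA v.
  have := psdA w; nra.
have : dotv w w <= lam ^+ 2.
  have [->|ww_neq0] := eqVneq (dotv w w) 0; first exact: sqr_ge0.
  rewrite -(ler_pM2r (_ : 0 < dotv w w)) -?expr2 //.
  by rewrite lt_neqAle eq_sym ww_neq0 dotv_ge0.
by rewrite -sqr_l2norm ler_pXn2r ?nnegrE ?l2norm_ge0.
Qed.

End PositiveSemidefinite.

End EuclideanSpace.

Section Moments.
Set Implicit Arguments. Unset Strict Implicit.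
Context {R : realType} {d : measure_display} {T : measurableType d}.
Variable P : probability T R.
Implicit Types (f g X Z : T -> R).

(* [fine] sends infinite expectations to 0: [mean f] is meaningful only for
   [f \in Lfun P 1]. *)
Local Notation mean f := (fine (expectation P f)).

Lemma Lfun1_dominated f g : measurable_fun setT f -> g \in Lfun P 1 ->
  (forall w, `|f w| <= `|g w|) -> f \in Lfun P 1.
Proof.
move=> mf /Lfun1_integrable ig fg; apply/Lfun1_integrable.
apply: le_integrable ig => //; first exact/measurable_EFinP.
by move=> w _ /=; rewrite lee_fin.
Qed.

Lemma Lfun1_expectation_le f M : measurable_fun setT f -> (forall w, 0 <= f w) ->
  ('E_P[f] <= M%:E)%E -> f \in Lfun P 1.
Proof.
move=> mf f0 fM; apply/Lfun1_integrable/integrableP; split.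
  exact/measurable_EFinP.
have -> : (\int[P]_x `|(EFin \o f) x| = 'E_P[f])%E.
  by rewrite unlock; apply: eq_integral => w _; rewrite /= ger0_norm.
by rewrite (le_lt_trans fM) // ltey.
Qed.

Lemma mean_expectation_le f M : measurable_fun setT f -> (forall w, 0 <= f w) ->
  ('E_P[f] <= M%:E)%E -> mean f <= M.
Proof.
move=> mf f0 fM; have f1 := Lfun1_expectation_le mf f0 fM.
by rewrite -lee_fin fineK ?expectation_fin_num.
Qed.

Lemma Lfun1_scale k f : f \in Lfun P 1 -> k \o* f \in Lfun P 1.
Proof. exact: Lfun_scale. Qed.

Lemma meanD f g : f \in Lfun P 1 -> g \in Lfun P 1 -> mean (f \+ g) = mean f + mean g.
Proof. by move=> f1 g1; rewrite expectationD // fineD ?expectation_fin_num. Qed.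

Lemma meanZ k f : f \in Lfun P 1 -> mean (k \o* f) = k * mean f.
Proof. by move=> f1; rewrite expectationZl // fineM ?expectation_fin_num. Qed.

Lemma mean_sum (I : Type) (s : seq I) (a : I -> R) (f : I -> T -> R) :
  (forall i, f i \in Lfun P 1) ->
  mean (\sum_(i <- s) (a i \o* f i)) = \sum_(i <- s) a i * mean (f i).
Proof.
move=> f1; elim: s => [|i s IHs].
  by rewrite !big_nil -[0 : T -> R]/(cst 0) expectation_cst.
rewrite !big_cons meanD ?meanZ ?IHs ?Lfun1_scale //.
by apply: rpred_sum => j _; exact: Lfun1_scale.
Qed.

Lemma mean_ge0 f : (forall w, 0 <= f w) -> 0 <= mean f.
Proof. by move=> f0; apply/fine_ge0/expectation_ge0. Qed.

Lemma ler_mean f g : f \in Lfun P 1 -> g \in Lfun P 1 ->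
  (forall w, f w <= g w) -> mean f <= mean g.
Proof.
move=> f1 g1 fg; rewrite -subr_ge0 -fineB ?expectation_fin_num //.
by rewrite -expectationB //; apply/fine_ge0/expectation_ge0 => w /=; rewrite subr_ge0.
Qed.

Lemma Lfun2_sqr_integrable f : measurable_fun setT f ->
  P.-integrable setT (EFin \o (fun w => f w ^+ 2)) -> f \in Lfun P 2%:E.
Proof.
move=> mf /integrableP [_ f2_fin].
rewrite inE; apply/andP; split; first by rewrite inE.
rewrite inE /= /finite_norm unlock /Lnorm.
apply: poweR_lty; apply: le_lt_trans f2_fin; rewrite le_eqVlt; apply/orP; left; apply/eqP.
apply: eq_integral => w _ /=.
by rewrite powR_mulrn ?normr_ge0 // real_normK ?num_real // ger0_norm ?sqr_ge0.
Qed.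

Lemma Lfun2_Lfun1 f : f \in Lfun P 2%:E -> f \in Lfun P 1.
Proof. exact/Lfun_subset12/fin_num_measure. Qed.

Lemma Lfun2_sum (I : Type) (s : seq I) (a : I -> R) (f : I -> T -> R) :
  (forall i, f i \in Lfun P 2%:E) -> \sum_(i <- s) (a i \o* f i) \in Lfun P 2%:E.
Proof.
move=> f2; have one_le2 : (1 <= 2%:E :> \bar R)%E by rewrite lee1n.
by apply: rpred_sum => i _; apply: Lfun_scale; rewrite ?ler1n.
Qed.

Lemma mean_variance X : X \in Lfun P 2%:E ->
  fine ('V_P[X])%E = mean (fun w => X w ^+ 2) - mean X ^+ 2.
Proof.
move=> X2; have X1 := Lfun2_Lfun1 X2.
have XX : (X ^+ 2)%R \in Lfun P 1 by rewrite expr2; exact: Lfun2_mul_Lfun1.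
rewrite varianceE // -(fineK (expectation_fin_num X1)) -EFin_expe.
by rewrite fineB ?expectation_fin_num.
Qed.

Lemma covariance_suml (I : Type) (s : seq I) (a : I -> R) (f : I -> T -> R) Z :
  (forall i, f i \in Lfun P 2%:E) -> Z \in Lfun P 2%:E ->
  fine (covariance P (\sum_(i <- s) (a i \o* f i)) Z) =
  \sum_(i <- s) a i * fine (covariance P (f i) Z).
Proof.
move=> f2 Z2; have Z1 := Lfun2_Lfun1 Z2.
have cov_fin g : g \in Lfun P 2%:E -> covariance P g Z \is a fin_num.
  by move=> g2; apply: covariance_fin_num => //; [exact: Lfun2_Lfun1 | exact: Lfun2_mul_Lfun1].
elim: s => [|i s IHs]; first by rewrite !big_nil -[0 : T -> R]/(cst 0) covariance_cst_l.
have one_le2 : (1 <= 2%:E :> \bar R)%E by rewrite lee1n.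
rewrite !big_cons covarianceDl ?Lfun_scale ?Lfun2_sum ?ler1n //.
rewrite covarianceZl ?(Lfun2_Lfun1 (f2 i)) ?Lfun2_mul_Lfun1 //.
by rewrite fineD ?fin_numM ?cov_fin ?Lfun2_sum // fineM ?cov_fin // IHs.
Qed.

Lemma mxform_covmx p (g : 'I_p -> T -> R) (v : 'cV[R]_p) :
  (forall i, g i \in Lfun P 2%:E) ->
  mxform (covmx P g) v v = fine (variance P (\sum_i (v i 0 \o* g i))).
Proof.
move=> g2; rewrite /variance covariance_suml ?Lfun2_sum //.
apply: eq_bigr => i _; rewrite covarianceC covariance_suml // mulr_sumr.
by apply: eq_bigr => j _; rewrite mxE covarianceC; ring.
Qed.

Lemma covmx_tr p (g : 'I_p -> T -> R) : (covmx P g)^T = covmx P g.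
Proof. by apply/matrixP => i j; rewrite !mxE covarianceC. Qed.

Lemma covmx_psd p (g : 'I_p -> T -> R) (v : 'cV[R]_p) :
  (forall i, g i \in Lfun P 2%:E) -> 0 <= mxform (covmx P g) v v.
Proof. by move=> g2; rewrite mxform_covmx //; apply/fine_ge0/variance_ge0. Qed.

Section FourthMoments.
Variables f h : T -> R.
Hypotheses (mf : measurable_fun setT f) (mh : measurable_fun setT h).
Hypotheses (f4 : (fun w => f w ^+ 4) \in Lfun P 1) (h4 : (fun w => h w ^+ 4) \in Lfun P 1).

Let sqr_sqr (x : R) : x ^+ 4 = (x ^+ 2) ^+ 2. Proof. by rewrite -exprM. Qed.

Lemma Lfun1_sqr_mul : (fun w => f w ^+ 2 * h w ^+ 2) \in Lfun P 1.
Proof.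
apply: (Lfun1_dominated (g := (fun w => f w ^+ 4) \+ (fun w => h w ^+ 4))).
- by apply: measurable_funM; apply: measurable_funX.
- exact: rpredD.
move=> w /=; have f2 := sqr_ge0 (f w); have h2 := sqr_ge0 (h w).
rewrite !sqr_sqr (ger0_norm (mulr_ge0 f2 h2)) ger0_norm ?addr_ge0 ?sqr_ge0 //.
by have := sqr_ge0 (f w ^+ 2 - h w ^+ 2); nra.
Qed.

Lemma mean_cauchy_schwarz :
  mean (fun w => f w ^+ 2 * h w ^+ 2) ^+ 2 <=
    mean (fun w => f w ^+ 4) * mean (fun w => h w ^+ 4).
Proof.
apply: discriminant_le => t.
pose F := (t ^+ 2 \o* (fun w => f w ^+ 4)) \+
  ((2 * t) \o* (fun w => f w ^+ 2 * h w ^+ 2)) \+ (fun w => h w ^+ 4).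
have F_ge0 w : 0 <= F w.
  by rewrite /F /= !sqr_sqr (_ : _ + _ = (t * f w ^+ 2 + h w ^+ 2) ^+ 2) ?sqr_ge0 //; ring.
have := mean_ge0 F_ge0.
by rewrite /F !meanD ?meanZ ?rpredD ?Lfun1_scale ?Lfun1_sqr_mul //; lra.
Qed.

Lemma Lfun2_mul : (fun w => f w * h w) \in Lfun P 2%:E.
Proof.
apply: Lfun2_sqr_integrable; first exact: measurable_funM.
have /Lfun1_integrable := Lfun1_sqr_mul.
by congr (_.-integrable _ _); apply/funext => w /=; rewrite exprMn.
Qed.

Lemma Lfun1_pow4_sub : (fun w => (f w - h w) ^+ 4) \in Lfun P 1.
Proof.
apply: (Lfun1_dominated (g := 8 \o* (fun w => f w ^+ 4) \+ 8 \o* (fun w => h w ^+ 4))).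
- by apply: measurable_funX; apply: measurable_funB.
- by apply: rpredD; apply: Lfun1_scale.
move=> w /=; rewrite ger0_norm ?pow4_ge0 // ger0_norm; last first.
  by have := pow4_ge0 (f w); have := pow4_ge0 (h w); lra.
by have := pow4_sub_le (f w) (h w); lra.
Qed.

Lemma mean_pow4_sub_le :
  mean (fun w => (f w - h w) ^+ 4) <=
    8 * mean (fun w => f w ^+ 4) + 8 * mean (fun w => h w ^+ 4).
Proof.
rewrite -!meanZ // -meanD ?Lfun1_scale //.
apply: ler_mean; rewrite ?rpredD ?Lfun1_scale ?Lfun1_pow4_sub // => w /=.
by have := pow4_sub_le (f w) (h w); lra.
Qed.

End FourthMoments.

Lemma dotv_xvec_sum p (xs : 'I_p -> T -> R) (v : 'cV[R]_p) :
  (fun w => dotv (xvec xs w) v) = \sum_i (v i 0 \o* xs i).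
Proof.
apply/funext => w; rewrite /dotv fct_sumE; apply: eq_bigr => i _.
by rewrite mxE.
Qed.

Lemma measurable_dotv_xvec p (xs : 'I_p -> T -> R) (v : 'cV[R]_p) :
  (forall i, measurable_fun setT (xs i)) ->
  measurable_fun setT (fun w => dotv (xvec xs w) v).
Proof.
move=> mxs; rewrite dotv_xvec_sum.
have : \sum_i (v i 0 \o* xs i) \in mfun.
  by apply: rpred_sum => i _; rewrite inE; apply: measurable_funM.
by rewrite inE.
Qed.

Lemma expectation_cond_exp p (xs : 'I_p -> T -> R) Z W :
  cond_exp_is P xs Z W -> 'E_P[Z]%E = 'E_P[W]%E.
Proof.
move=> [_ ZW]; rewrite expectation.unlock; apply: ZW.
rewrite /sigma_of -[X in <<s _ >> X](setD0 setT).
by apply: (sigma_algebraCD (D := setT)); exact: sigma_algebra0.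
Qed.

Lemma mean_cond_exp_le p (xs : 'I_p -> T -> R) (Z u v : T -> R) (c M1 M2 : R) :
  0 <= c -> measurable_fun setT u -> measurable_fun setT v ->
  ('E_P[(fun w => `|u w|)%R] <= M1%:E)%E ->
  ('E_P[(fun w => `|v w| ^+ 2)%R] <= M2%:E)%E ->
  cond_exp_is P xs Z (fun w => c ^+ 3 * u w + 3 * c ^+ 2 * v w ^+ 2) ->
  mean Z <= c ^+ 3 * M1 + 3 * c ^+ 2 * M2.
Proof.
move=> c0 mu mv uM1 vM2 ZW; rewrite (expectation_cond_exp ZW).
have mu_abs : measurable_fun setT (fun w => `|u w|).
  exact: (measurableT_comp (@normr_measurable R setT) mu).
have mv_sqr : measurable_fun setT (fun w => `|v w| ^+ 2).
  exact: measurable_funX (measurableT_comp (@normr_measurable R setT) mv).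
have u1 := Lfun1_expectation_le mu_abs (fun w => normr_ge0 _) uM1.
have v1 := Lfun1_expectation_le mv_sqr (fun w => sqr_ge0 _) vM2.
pose g := c ^+ 3 \o* (fun w => `|u w|) \+ (3 * c ^+ 2) \o* (fun w => `|v w| ^+ 2).
have g1 : g \in Lfun P 1 by rewrite rpredD ?Lfun1_scale.
have Wg w : `|c ^+ 3 * u w + 3 * c ^+ 2 * v w ^+ 2| <= g w.
  apply: le_trans (ler_normD _ _) _.
  by rewrite /g /= !normrM (ger0_norm c0) (ger0_norm (ler0n _ 3)); lra.
have W1 : (fun w => c ^+ 3 * u w + 3 * c ^+ 2 * v w ^+ 2) \in Lfun P 1.
  apply: Lfun1_dominated g1 _ => [|w]; last exact: le_trans (Wg w) (ler_norm _).
  by apply: measurable_funD; apply: measurable_funM => //; exact: measurable_funX.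
apply: le_trans (ler_mean W1 g1 (fun w => le_trans (ler_norm _) (Wg w))) _.
rewrite meanD ?Lfun1_scale // !meanZ //.
by rewrite lerD // ler_wpM2l ?mulr_ge0 ?exprn_ge0 // mean_expectation_le //;
  move=> w; rewrite ?sqr_ge0.
Qed.

Section CenteredVector.
Variables (p : nat) (xs : 'I_p -> T -> R).
Hypotheses (x_mean0 : forall i, 'E_P[xs i]%E = 0%E) (x2 : forall i, xs i \in Lfun P 2%:E).

Lemma mean_sqr_dotv_xvec v :
  mean (fun w => dotv (xvec xs w) v ^+ 2) = mxform (covmx P xs) v v.
Proof.
rewrite mxform_covmx // mean_variance ?Lfun2_sum // mean_sum => [|i]; last first.
  exact: Lfun2_Lfun1.
rewrite [X in _ - X ^+ 2]big1 => [|i _]; last by rewrite x_mean0 mulr0.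
by rewrite expr0n subr0 -dotv_xvec_sum.
Qed.

Lemma bounded_moments4_centered C4 v : bounded_moments P 2 C4 xs -> l2norm v = 1 ->
  ('E_P[(fun w => dotv (xvec xs w) v ^+ 4)%R] <=
    (C4 * mxform (covmx P xs) v v ^+ 2)%:E)%E.
Proof.
move=> bm v1; have mean0 : meanvec P xs = 0.
  by apply/matrixP => i j; rewrite !mxE x_mean0.
have sub0 k : (fun w => dotv (xvec xs w - 0) v ^+ k) = (fun w => dotv (xvec xs w) v ^+ k).
  by apply/funext => w; rewrite subr0.
by have := bm v v1; rewrite mean0 (sub0 (2 * 2)%N) sub0 mean_sqr_dotv_xvec.
Qed.

End CenteredVector.

Section ScaledVector.
Variables (p : nat) (Z : T -> R) (xs : 'I_p -> T -> R).
Hypotheses (mZ : measurable_fun setT Z) (mxs : forall i, measurable_fun setT (xs i)).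
Hypotheses (Z4 : (fun w => Z w ^+ 4) \in Lfun P 1)
  (x4 : forall i, (fun w => xs i w ^+ 4) \in Lfun P 1).

Let Zxs i w := Z w * xs i w.

Let Lfun2_Zxs i : Zxs i \in Lfun P 2%:E.
Proof. exact: Lfun2_mul. Qed.

Lemma mxform_covmx_scaled_le v :
  (fun w => dotv (xvec xs w) v ^+ 4) \in Lfun P 1 ->
  mxform (covmx P Zxs) v v ^+ 2 <=
    mean (fun w => Z w ^+ 4) * mean (fun w => dotv (xvec xs w) v ^+ 4).
Proof.
move=> xv4; have mxv := measurable_dotv_xvec v mxs.
have sumE : \sum_i (v i 0 \o* Zxs i) = (fun w => Z w * dotv (xvec xs w) v).
  apply/funext => w; rewrite fct_sumE /dotv mulr_sumr.
  by apply: eq_bigr => i _; rewrite /Zxs mxE /=; ring.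
have var_ge0 := covmx_psd v Lfun2_Zxs.
rewrite (mxform_covmx v Lfun2_Zxs) sumE mean_variance ?Lfun2_mul // in var_ge0 *.
set m2 := mean (fun w => (Z w * _) ^+ 2) in var_ge0 *.
have m2_ge0 : 0 <= m2 by apply: mean_ge0 => w; exact: sqr_ge0.
have m2_cs : m2 ^+ 2 <=
    mean (fun w => Z w ^+ 4) * mean (fun w => dotv (xvec xs w) v ^+ 4).
  by rewrite /m2; under eq_fun do rewrite exprMn; exact: mean_cauchy_schwarz.
by apply: le_trans m2_cs; rewrite ler_pXn2r ?nnegrE // gerBl sqr_ge0.
Qed.

Lemma opnorm_covmx_scaled_le C D : 0 <= C ->
  mean (fun w => Z w ^+ 4) <= D -> (forall i, xs i \in Lfun P 2%:E) ->
  (forall v, l2norm v = 1 -> (fun w => dotv (xvec xs w) v ^+ 4) \in Lfun P 1) ->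
  (forall v, l2norm v = 1 ->
    mean (fun w => dotv (xvec xs w) v ^+ 4) <= C * mxform (covmx P xs) v v ^+ 2) ->
  opnorm (covmx P Zxs) <= Num.sqrt (C * D) * opnorm (covmx P xs).
Proof.
move=> C0 Z4D x2 xv4 xv4C.
have Z4_ge0 := mean_ge0 (fun w => pow4_ge0 (Z w)).
have D0 : 0 <= D := le_trans Z4_ge0 Z4D.
apply: opnorm_psd_le; first exact: covmx_tr.
- by move=> z; exact: covmx_psd Lfun2_Zxs.
- by rewrite mulr_ge0 ?sqrtr_ge0 ?opnorm_ge0.
move=> v v1; set s := mxform (covmx P xs) v v.
have s0 : 0 <= s := covmx_psd v x2.
apply: (@le_trans _ _ (Num.sqrt (C * D) * s)).
  rewrite -(ler_pXn2r (_ : (0 < 2)%N)) ?nnegrE ?mulr_ge0 ?sqrtr_ge0 ?(covmx_psd v Lfun2_Zxs) //.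
  apply: le_trans (mxform_covmx_scaled_le (xv4 v v1)) _.
  rewrite exprMn sqr_sqrtr ?mulr_ge0 //.
  have xv4_ge0 := mean_ge0 (fun w => pow4_ge0 (dotv (xvec xs w) v)).
  apply: le_trans (ler_pM Z4_ge0 xv4_ge0 Z4D (xv4C v v1)) _.
  by rewrite mulrCA mulrA.
by rewrite ler_wpM2l ?sqrtr_ge0 // mxform_le_opnorm.
Qed.

End ScaledVector.

End Moments.

Lemma measurable_fun_derivable (R : realType) (f : R -> R) :
  (forall t, derivable f t 1) -> measurable_fun setT f.
Proof.
move=> df; apply: continuous_measurable_fun => t.
exact/differentiable_continuous/derivable1_diffP.
Qed.

Lemma measurable_derive1 (R : realType) (f : R -> R) :
  (forall t, derivable f t 1) -> measurable_fun setT (derive1 f).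
Proof.
move=> df; have mf := measurable_fun_derivable df.
apply: (@measurable_fun_cvg _ R R setT
  (fun n (t : R) => (harmonic n)^-1 * (f (harmonic n + t) - f t))).
  move=> n; apply: measurable_funM => //; apply: measurable_funB => //.
  by apply: measurableT_comp => //; exact: measurable_funD.
move=> t _; rewrite derive1E /derive.
have harmonic_neq0 n : (harmonic n : R) != 0 by rewrite gt_eqF ?harmonic_gt0.
move/cvgr_dnbhsP : (df t) => /(_ harmonic (conj harmonic_neq0 cvg_harmonic)).
apply: cvg_trans; apply: near_eq_cvg; near=> n.
by rewrite /= -[_%:A]/(_ * 1) mulr1.
Unshelve. all: end_near.
Qed.

Section GeneralizedLinearModel.
Context {R : realType} {d : measure_display} {T : measurableType d}.
Variables (P : probability T R) (p : nat) (xs : 'I_p -> {RV P >-> R}) (y : {RV P >-> R}).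
Variables (Phi : R -> R) (c C4 L4 B4 M22 M41 : R) (thetas theta : 'cV[R]_p).

Local Notation mean f := (fine (expectation P f)).
Let x i : T -> R := xs i.
Let eta w := dotv (xvec x w) thetas.
(* The gradient of the loss at theta is [Z w *: xvec x w]. *)
Let Z w := - y w + derive1n 1 Phi (dotv (xvec x w) theta).
Let n := l2norm (theta - thetas).

Hypotheses (x_mean0 : forall i, 'E_P[xs i]%E = 0%E)
  (x_sqr : forall i, P.-integrable setT (fun w => ((xs i w) ^+ 2)%:E))
  (x_moments : bounded_moments P 2 C4 x).
Hypotheses (dPhi : forall k, (k < 4)%N -> forall t, derivable (derive1n k Phi) t 1)
  (c_ge0 : 0 <= c) (L4_ge0 : 0 <= L4) (B4_ge0 : 0 <= B4).
Hypothesis cond4 : cond_exp_is P x (fun w => (y w - derive1n 1 Phi (eta w)) ^+ 4)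
  (fun w => c ^+ 3 * derive1n 4 Phi (eta w) + 3 * c ^+ 2 * derive1n 2 Phi (eta w) ^+ 2).
Hypothesis Phi'_lipschitz4 :
  ('E_P[(fun w => `|derive1n 1 Phi (dotv (xvec x w) theta) - derive1n 1 Phi (eta w)| ^+ 4)%R]
    <= (L4 * n ^+ 4 + B4)%:E)%E.
Hypotheses (Phi''_moment2 : ('E_P[(fun w => `|derive1n 2 Phi (eta w)| ^+ 2)%R] <= M22%:E)%E)
  (Phi''''_moment1 : ('E_P[(fun w => `|derive1n 4 Phi (eta w)|)%R] <= M41%:E)%E).

Let mx i : measurable_fun setT (x i). Proof. exact: measurable_funPT. Qed.

Let measurable_Phi k : (k <= 4)%N -> measurable_fun setT (derive1n k Phi).
Proof.
rewrite leq_eqVlt => /orP[/eqP ->|k_lt4]; last exact: measurable_fun_derivable (dPhi k_lt4).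
by rewrite derive1nS; apply: measurable_derive1; exact: dPhi.
Qed.

Let measurable_Phi_dotv k v : (k <= 4)%N ->
  measurable_fun setT (fun w => derive1n k Phi (dotv (xvec x w) v)).
Proof.
by move=> k_le4; exact: measurableT_comp (measurable_Phi k_le4) (measurable_dotv_xvec v mx).
Qed.

Lemma mean_noise4_le :
  (fun w => (y w - derive1n 1 Phi (eta w)) ^+ 4) \in Lfun P 1 /\
  mean (fun w => (y w - derive1n 1 Phi (eta w)) ^+ 4) <= c ^+ 3 * M41 + 3 * c ^+ 2 * M22.
Proof.
split; first by apply/Lfun1_integrable; case: cond4.
by apply: (mean_cond_exp_le c_ge0 _ _ Phi''''_moment1 Phi''_moment2 cond4);
  exact: measurable_Phi_dotv.
Qed.

Lemma mean_residual4_le :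
  (fun w => Z w ^+ 4) \in Lfun P 1 /\
  mean (fun w => Z w ^+ 4) <= 8 * (L4 * n ^+ 4 + B4) + 8 * (c ^+ 3 * M41 + 3 * c ^+ 2 * M22).
Proof.
pose b w := derive1n 1 Phi (dotv (xvec x w) theta) - derive1n 1 Phi (eta w).
pose a w := y w - derive1n 1 Phi (eta w).
have ZE : (fun w => Z w ^+ 4) = (fun w => (b w - a w) ^+ 4).
  by apply/funext => w; rewrite /Z /b /a; congr (_ ^+ 4); ring.
have mb : measurable_fun setT b by apply: measurable_funB; exact: measurable_Phi_dotv.
have ma : measurable_fun setT a.
  by apply: measurable_funB; [exact: measurable_funPT | exact: measurable_Phi_dotv].
have b4_le : ('E_P[(fun w => b w ^+ 4)%R] <= (L4 * n ^+ 4 + B4)%:E)%E.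
  by under eq_fun do rewrite -(ger0_norm (pow4_ge0 _)) normrX.
have b4 := Lfun1_expectation_le (measurable_funX 4 mb) (fun w => pow4_ge0 _) b4_le.
have [a4 a4_le] := mean_noise4_le.
rewrite ZE; split; first exact: Lfun1_pow4_sub.
apply: le_trans (mean_pow4_sub_le mb ma b4 a4) _.
rewrite lerD // ler_wpM2l //.
exact: mean_expectation_le (measurable_funX 4 mb) (fun w => pow4_ge0 _) b4_le.
Qed.

Let S := Num.sqrt L4 * n ^+ 2 + Num.sqrt B4 + c * Num.sqrt (3 * M22) +
  Num.sqrt (c ^+ 3 * M41).

Lemma mean_residual4_le_sqr : mean (fun w => Z w ^+ 4) <= 8 * S ^+ 2.
Proof.
have M22_ge0 : 0 <= M22.
  by rewrite -lee_fin (le_trans _ Phi''_moment2) // expectation_ge0 // => w; exact: sqr_ge0.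
have M41_ge0 : 0 <= M41.
  by rewrite -lee_fin (le_trans _ Phi''''_moment1) // expectation_ge0.
have M22_ge0' : 0 <= 3 * M22 by rewrite mulr_ge0.
have M41_ge0' : 0 <= c ^+ 3 * M41 by rewrite mulr_ge0 ?exprn_ge0.
have [_ Z4_le] := mean_residual4_le; apply: le_trans Z4_le _.
have := sqr_add4_le (mulr_ge0 (sqrtr_ge0 L4) (sqr_ge0 n)) (sqrtr_ge0 B4)
  (mulr_ge0 c_ge0 (sqrtr_ge0 (3 * M22))) (sqrtr_ge0 (c ^+ 3 * M41)).
rewrite !exprMn (sqr_sqrtr L4_ge0) (sqr_sqrtr B4_ge0) (sqr_sqrtr M22_ge0').
by rewrite (sqr_sqrtr M41_ge0') /S; lra.
Qed.

Lemma opnorm_covmx_gradient_le C : C4 <= C -> 0 <= C ->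
  opnorm (covmx P (fun i w => Z w * x i w)) <=
    Num.sqrt (8 * C) * S * opnorm (covmx P x).
Proof.
move=> C4C C0.
have x2 i : x i \in Lfun P 2%:E := Lfun2_sqr_integrable (mx i) (x_sqr i).
have mxv4 v : measurable_fun setT (fun w => dotv (xvec x w) v ^+ 4).
  exact/measurable_funX/measurable_dotv_xvec.
have xv4_le v : l2norm v = 1 -> ('E_P[(fun w => dotv (xvec x w) v ^+ 4)%R] <=
    (C * mxform (covmx P x) v v ^+ 2)%:E)%E.
  move=> v1; apply: le_trans (bounded_moments4_centered x_mean0 x2 x_moments v1) _.
  by rewrite lee_fin ler_wpM2r ?sqr_ge0.
have xv4 v v1 := Lfun1_expectation_le (mxv4 v) (fun w => pow4_ge0 _) (xv4_le v v1).
have x4 i : (fun w => x i w ^+ 4) \in Lfun P 1.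
  rewrite (_ : (fun w => _) = (fun w => dotv (xvec x w) (delta_mx i 0) ^+ 4)).
    exact: xv4 (l2norm_delta R i).
  by apply/funext => w; rewrite dotv_delta mxE.
have mZ : measurable_fun setT Z.
  by apply: measurable_funD; [exact/measurable_funN/measurable_funPT |
    exact: measurable_Phi_dotv].
have [Z4 _] := mean_residual4_le.
have S_ge0 : 0 <= S by rewrite !addr_ge0 ?mulr_ge0 ?sqrtr_ge0 ?sqr_ge0.
have := opnorm_covmx_scaled_le mZ mx Z4 x4 C0 mean_residual4_le_sqr x2 xv4
  (fun v v1 => mean_expectation_le (mxv4 v) (fun w => pow4_ge0 _) (xv4_le v v1)).
by rewrite mulrCA mulrA sqrtrM ?mulr_ge0 // sqrtr_sqr ger0_norm.
Qed.

End GeneralizedLinearModel.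

Theorem mainTheorem5 (R : realType) (C4 : R) :
  exists C1 C2 : R, 0 < C1 /\ 0 < C2 /\
  forall (p : nat) (d : measure_display) (T : measurableType d)
    (P : probability T R) (xs : 'I_p -> {RV P >-> R}) (y : {RV P >-> R})
    (Phi : R -> R) (c : R) (thetas : 'cV[R]_p)
    (L2 L4 B2 B4 M22 M41 : R),
    (forall i, ('E_P[xs i] = 0)%E) ->
    (forall i, P.-integrable setT (fun w => ((xs i w) ^+ 2)%:E)) ->
    bounded_moments P 2 C4 (fun i => xs i : T -> R) ->
    (forall n, (n < 4)%N -> forall t, derivable ((derive1n n Phi)) t 1) ->
    0 < c ->
    let eta := fun w => dotv (xvec (fun i => xs i : T -> R) w) thetas in
    cond_exp_is P (fun i => xs i : T -> R) y (fun w => (derive1n 1 Phi) (eta w)) ->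
    cond_exp_is P (fun i => xs i : T -> R)
      (fun w => (y w - (derive1n 1 Phi) (eta w)) ^+ 4)
      (fun w => c ^+ 3 * (derive1n 4 Phi) (eta w) + 3 * c ^+ 2 * ((derive1n 2 Phi) (eta w)) ^+ 2) ->
    0 <= L2 -> 0 <= L4 -> 0 <= B2 -> 0 <= B4 ->
    (forall theta : 'cV[R]_p,
      'E_P[(fun w => `|(derive1n 1 Phi) (dotv (xvec (fun i => xs i : T -> R) w) theta)
                     - (derive1n 1 Phi) (eta w)| ^+ 2)%R]
        <= (L2 * l2norm (theta - thetas) ^+ 2 + B2)%:E)%E ->
    (forall theta : 'cV[R]_p,
      'E_P[(fun w => `|(derive1n 1 Phi) (dotv (xvec (fun i => xs i : T -> R) w) theta)
                     - (derive1n 1 Phi) (eta w)| ^+ 4)%R]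
        <= (L4 * l2norm (theta - thetas) ^+ 4 + B4)%:E)%E ->
    ('E_P[(fun w => `|(derive1n 2 Phi) (eta w)| ^+ 2)%R] <= M22%:E)%E ->
    ('E_P[(fun w => `|(derive1n 4 Phi) (eta w)|)%R] <= M41%:E)%E ->
    forall theta : 'cV[R]_p,
      let Sigma := covmx P (fun i => xs i : T -> R) in
      let grad := fun (i : 'I_p) (w : T) =>
        (- y w + (derive1n 1 Phi) (dotv (xvec (fun i => xs i : T -> R) w) theta)) * xs i w in
      opnorm (covmx P grad) <=
        C1 * l2norm (theta - thetas) ^+ 2 * opnorm Sigma * (Num.sqrt L4 + L2)
        + C2 * opnorm Sigma *
          (B2 + Num.sqrt B4 + c * Num.sqrt (3 * M22) + Num.sqrt (c ^+ 3 * M41)).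
Proof.
pose C := Num.max C4 1; pose K := Num.sqrt (8 * C).
have C4_le : C4 <= C by rewrite le_max lexx.
have C_ge1 : 1 <= C by rewrite le_max lexx orbT.
have K_gt0 : 0 < K by rewrite sqrtr_gt0 mulr_gt0 // (lt_le_trans ltr01).
exists K, K; do 2 split => //.
move=> p d T P xs y Phi c thetas L2 L4 B2 B4 M22 M41 x_mean0 x_sqr x_moments dPhi
  c_gt0 eta _ cond4 L2_ge0 L4_ge0 B2_ge0 B4_ge0 _ Phi'_lipschitz4 Phi''_moment2
  Phi''''_moment1 theta; cbv zeta.
have := opnorm_covmx_gradient_le x_mean0 x_sqr x_moments dPhi (ltW c_gt0) L4_ge0 B4_ge0
  cond4 (Phi'_lipschitz4 theta) Phi''_moment2 Phi''''_moment1 C4_le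
  (le_trans ler01 C_ge1).
move=> /le_trans; apply; rewrite -/K.
have := mulr_ge0 (mulr_ge0 (ltW K_gt0) (opnorm_ge0 (covmx P (fun i => xs i : T -> R))))
  (addr_ge0 (mulr_ge0 L2_ge0 (sqr_ge0 (l2norm (theta - thetas)))) B2_ge0).
lra.
Qed.
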